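(* Let $E$ be a nonempty closed convex subset of a real Hilbert space $H$ and let $S:E\to E$ be a $(\lambda,\gamma)$-generalized hybrid mapping for some $\lambda,\gamma\in\mathbb{R}$ with $F(S)\neq\emptyset$. Let $\{\alpha_n\}$ satisfy $0<\alpha\le\alpha_n\le 1$ for all $n$ (for some constant $\alpha>0$), and let $\{\beta_n\}$ be a sequence in $[b,1]$ for some $b\in(0,1)$ with $\liminf_{n\to\infty}\beta_n(1-\beta_n)>0$. Let $\{x_n\}$ and $\{u_n\}$ be generated by $x_1=x\in E$ and, for all $n\in\mathbb{N}$, $$u_n\in E \text{ such that } \langle y-u_n,u_n-x_n\rangle\ge 0 \quad\text{for all } y\in E,$$ $$y_n=(1-\beta_n)x_n+\beta_n Su_n,\qquad x_{n+1}=(1-\alpha_n)x_n+\alpha_n Sy_n.$$ Then $\{x_n\}$ converges weakly to a point $v\in F(S)$, where $v=\lim_{n\to\infty}P_{F(S)}(x_n)$.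
   Context: $F(S)=\{x\in E: Sx=x\}$. A mapping $S:E\to E$ is $(\lambda,\gamma)$-generalized hybrid if $\lambda\|Sx-Sy\|^2+(1-\lambda)\|x-Sy\|^2\le \gamma\|Sx-y\|^2+(1-\gamma)\|x-y\|^2$ for all $x,y\in E$. For a nonempty closed convex $K\subset H$, $P_K$ is the metric (nearest point) projection of $H$ onto $K$; the limit defining $v$ is in norm. *)

From HB Require Import structures.
From mathcomp Require Import all_boot all_order all_algebra.
From mathcomp Require Import all_classical all_reals all_analysis.
Set Implicit Arguments. Unset Strict Implicit. Unset Printing Implicit Defensive.
Import Order.TTheory GRing.Theory Num.Theory.
Import numFieldNormedType.Exports.
Local Open Scope classical_set_scope.
Local Open Scope ring_scope.

(* A real Hilbert space: a complete normed R-module V (R : realType) whose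
   norm is induced by a real inner product. *)
Record inner_product (R : realType) (V : completeNormedModType R) := InnerProduct {
  inner :> V -> V -> R ;
  inner_sym : forall x y, inner x y = inner y x ;
  inner_addl : forall x y z, inner (x + y) z = inner x z + inner y z ;
  inner_scalel : forall (a : R) x y, inner (a *: x) y = a * inner x y ;
  inner_norm : forall x, `|x| ^+ 2 = inner x x
}.

Definition convex {R : realType} {V : completeNormedModType R} (E : set V) :=
  forall x y (t : R), E x -> E y -> 0 <= t <= 1 -> E ((1 - t) *: x + t *: y).

Definition fixpts {T : Type} (S : T -> T) : set T := [set x | S x = x].

Definition gen_hybrid {R : realType} {V : completeNormedModType R}
  (E : set V) (S : V -> V) (lam gam : R) :=
  forall x y, E x -> E y ->
    lam * `|S x - S y| ^+ 2 + (1 - lam) * `|x - S y| ^+ 2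
    <= gam * `|S x - y| ^+ 2 + (1 - gam) * `|x - y| ^+ 2.

(* metric (nearest point) projection onto K: a nearest point of K to x
   (chosen via xget; unique when K is nonempty closed convex) *)
Definition metric_proj {R : realType} {V : completeNormedModType R}
  (K : set V) (x : V) : V :=
  xget 0 [set z | K z /\ forall w, K w -> `|x - z| <= `|x - w|].

Definition weak_cvg {R : realType} {V : completeNormedModType R}
  (ip : inner_product V) (x : nat -> V) (v : V) :=
  forall w, (fun n => ip (x n) w) @ \oo --> ip v w.

From HB Require Import structures.
From mathcomp Require Import all_boot all_order all_algebra.
From mathcomp Require Import all_classical all_reals all_analysis.
From mathcomp Require Import ring lra.
Import Order.TTheory GRing.Theory Num.Theory.
Import numFieldNormedType.Exports.
Local Open Scope classical_set_scope.
Local Open Scope ring_scope.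

(* Since [x n] stays in [E], [u n = P_E (x n) = x n] and the scheme is an Ishikawa
   iteration. A generalized hybrid map with a fixed point is quasi-nonexpansive, so
   the convex-combination identity makes [|p - x n|] nonincreasing for every
   [p] in [F(S)], with decrease at least [alpha beta_n (1 - beta_n) |x n - S x n|^2];
   the liminf hypothesis then gives [|x n - S x n| -> 0]. Fejér monotonicity makes
   [P_F(S) (x n)] Cauchy, with limit [v]. A weak cluster point [z] of the bounded
   sequence [x n] exists (Tychonoff in the product topology plus the Riesz
   representation); it lies in [E], is fixed by [S] (demiclosedness, from the
   generalized hybrid inequality at [(x n, z)]), and equals [v] by the variational
   inequality of [P_F(S)]. Hence every weak cluster point is [v]. *)

Section InnerProduct.
Context {R : realType} {V : completeNormedModType R} (ip : inner_product V).

Lemma inner_addr x y z : ip x (y + z) = ip x y + ip x z.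
Proof. by rewrite inner_sym inner_addl !(inner_sym ip _ x). Qed.

Lemma inner_scaler a x y : ip x (a *: y) = a * ip x y.
Proof. by rewrite inner_sym inner_scalel inner_sym. Qed.

Lemma innerNl x y : ip (- x) y = - ip x y.
Proof. by rewrite -scaleN1r inner_scalel mulN1r. Qed.

Lemma innerNr x y : ip x (- y) = - ip x y.
Proof. by rewrite -scaleN1r inner_scaler mulN1r. Qed.

Lemma inner0l y : ip 0 y = 0.
Proof. by rewrite -(scale0r (0 : V)) inner_scalel mul0r. Qed.

Lemma inner0r y : ip y 0 = 0.
Proof. by rewrite inner_sym inner0l. Qed.

Lemma innerBl x y z : ip (x - y) z = ip x z - ip y z.
Proof. by rewrite inner_addl innerNl. Qed.

Lemma innerBr x y z : ip x (y - z) = ip x y - ip x z.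
Proof. by rewrite inner_addr innerNr. Qed.

End InnerProduct.

Definition innerE :=
  (@inner_addl, @inner_addr, @innerBl, @innerBr, @inner_scalel, @inner_scaler,
   @innerNl, @innerNr).

Section InnerProductNorm.
Context {R : realType} {V : completeNormedModType R} (ip : inner_product V).

Lemma sqr_normD x y : `|x + y| ^+ 2 = `|x| ^+ 2 + 2 * ip x y + `|y| ^+ 2.
Proof. rewrite !(inner_norm ip) !innerE (inner_sym ip y x); ring. Qed.

Lemma sqr_normB x y : `|x - y| ^+ 2 = `|x| ^+ 2 - 2 * ip x y + `|y| ^+ 2.
Proof. rewrite !(inner_norm ip) !innerE (inner_sym ip y x); ring. Qed.

Lemma sqr_norm_convex_comb (t : R) (x y : V) : `|(1 - t) *: x + t *: y| ^+ 2 =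
  (1 - t) * `|x| ^+ 2 + t * `|y| ^+ 2 - t * (1 - t) * `|x - y| ^+ 2.
Proof. rewrite !(inner_norm ip) !innerE (inner_sym ip y x); ring. Qed.

Lemma cauchy_schwarz x y : `|ip x y| <= `|x| * `|y|.
Proof.
rewrite -(ler_pXn2r (n := 2)) ?nnegrE ?mulr_ge0 // real_normK ?num_real //.
have [->|y0] := eqVneq y 0.
  by rewrite inner0r normr0 !expr2 !mul0r mulr0.
pose w := `|y| ^+ 2 *: x - ip x y *: y.
have : 0 <= ip w w by rewrite -(inner_norm ip) sqr_ge0.
rewrite /w !innerE -!(inner_norm ip) (inner_sym ip y x) => h.
have y2 : 0 < `|y| ^+ 2 by rewrite exprn_gt0 // normr_gt0.
have : 0 <= `|y| ^+ 2 * (`|x| ^+ 2 * `|y| ^+ 2 - ip x y ^+ 2) by lra.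
by rewrite (pmulr_rge0 _ y2) subr_ge0 exprMn.
Qed.

Lemma sqr_norm_le0 (x : V) : `|x| ^+ 2 <= 0 -> x = 0.
Proof. by move=> h; apply/eqP; rewrite -normr_eq0 -sqrf_eq0 eq_le h sqr_ge0. Qed.

End InnerProductNorm.

Section Sequences.
Context {R : realType} {V : completeNormedModType R}.

Lemma cvgn_dist_ltP (u : nat -> V) (l : V) : u @ \oo --> l <->
  forall e : R, 0 < e -> exists N, forall n, (N <= n)%N -> `|l - u n| < e.
Proof.
split=> [/cvgrPdist_lt h e e0 | h]; first by have [N _ HN] := h e e0; exists N.
by apply/cvgrPdist_lt => e e0; have [N HN] := h e e0; exists N.
Qed.

Lemma cauchy_seq_cvg {u : nat -> V} :
  (forall e : R, 0 < e -> exists N, forall m n, (N <= m)%N -> (N <= n)%N ->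
     `|u m - u n| < e) -> exists l : V, u @ \oo --> l.
Proof.
move=> hu; suff /cvg_ex[l ul] : cvgn u by exists l.
apply/cauchy_cvgP/cauchy_exP => e e0.
have [N HN] := hu e e0; exists (u N); exists N => // n Nn.
by rewrite -ball_normE /=; apply: HN.
Qed.

End Sequences.

Lemma natSinv_lt {R : realType} {e : R} : 0 < e ->
  exists N, forall n, (N <= n)%N -> n.+1%:R^-1 < e.
Proof. by move=> e0; have [N _ HN] := near_infty_natSinv_lt (PosNum e0); exists N. Qed.

Lemma convex_comb_subr {R : realType} {V : completeNormedModType R}
    (t : R) (x p q : V) :
  (1 - t) *: (x - p) + t *: (x - q) = x - ((1 - t) *: p + t *: q).
Proof. by rewrite !scalerBr opprD addrACA -scalerDl subrK scale1r. Qed.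

Section NearestPoint.
Context {R : realType} {V : completeNormedModType R} (ip : inner_product V).

Lemma sqr_dist_convex_le {C : set V} {x c1 c2 : V} {d : R} :
  convex C -> C c1 -> C c2 -> 0 <= d -> (forall w, C w -> d <= `|x - w|) ->
  `|c1 - c2| ^+ 2 <= 2 * `|x - c1| ^+ 2 + 2 * `|x - c2| ^+ 2 - 4 * d ^+ 2.
Proof.
move=> Ccv Cc1 Cc2 d0 hd.
have Cm : C ((1 - 1/2) *: c1 + (1/2) *: c2).
  by apply: Ccv => //; apply/andP; split; lra.
have := hd _ Cm; rewrite -convex_comb_subr => dm.
have dm2 : d ^+ 2 <= `|(1 - 1/2) *: (x - c1) + (1/2) *: (x - c2)| ^+ 2.
  by rewrite ler_pXn2r ?nnegrE.
rewrite (sqr_norm_convex_comb ip) in dm2.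
have e12 : (x - c1) - (x - c2) = c2 - c1 by rewrite opprB addrC addrA subrK.
rewrite e12 (distrC c2) in dm2; lra.
Qed.

Lemma minimizing_seq_cauchy {C : set V} {x : V} {d : R} {c : nat -> V} :
  convex C -> 0 <= d -> (forall w, C w -> d <= `|x - w|) ->
  (forall n, C (c n) /\ `|x - c n| < d + n.+1%:R^-1) ->
  forall e : R, 0 < e ->
    exists N, forall m n, (N <= m)%N -> (N <= n)%N -> `|c m - c n| < e.
Proof.
move=> Ccv d0 dle hc e e0.
pose del := e ^+ 2 / (8 * (d + 1)).
have del0 : 0 < del by apply: divr_gt0; [exact: exprn_gt0 | lra].
have hdel : del * (8 * (d + 1)) = e ^+ 2 by rewrite divfK //; lra.
have [N HN] := natSinv_lt del0.
exists N => m n Nm Nn.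
have [[Cm hm] [Cn hn]] := (hc m, hc n).
have hQ := sqr_dist_convex_le Ccv Cm Cn d0 dle.
have := HN m Nm; have := HN n Nn.
have i0 : (0 : R) < m.+1%:R^-1 by rewrite invr_gt0 ltr0n.
have j0 : (0 : R) < n.+1%:R^-1 by rewrite invr_gt0 ltr0n.
have i1 : (m.+1%:R : R)^-1 <= 1 by rewrite invf_le1 ?ler1n ?ltr0n.
have j1 : (n.+1%:R : R)^-1 <= 1 by rewrite invf_le1 ?ler1n ?ltr0n.
move: hm hn hQ i0 j0 i1 j1.
set i := m.+1%:R^-1; set j := n.+1%:R^-1.
set A := `|x - c m|; set B := `|x - c n|; set Q := `|c m - c n|.
have [A0 B0 Q0] : [/\ 0 <= A, 0 <= B & 0 <= Q] by rewrite !normr_ge0.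
move=> hA hB hQ i0 j0 i1 j1 jdel idel.
rewrite -(ltr_pXn2r (n := 2)) ?nnegrE ?(ltW e0) //.
have hA2 : A ^+ 2 <= (d + i) ^+ 2 by nra.
have hB2 : B ^+ 2 <= (d + j) ^+ 2 by nra.
have hQ2 : Q ^+ 2 <= (4 * d + 2) * (i + j) by nra.
nra.
Qed.

(* The limit of a minimizing sequence, with [d] the distance from [x] to [C]. *)
Lemma nearest_point_exists (C : set V) (x : V) : closed C -> convex C -> C !=set0 ->
  exists2 c, C c & forall w, C w -> `|x - c| <= `|x - w|.
Proof.
move=> Ccl Ccv [c0 Cc0].
pose D := [set r | exists2 c, C c & r = `|x - c|].
have D0 : D !=set0 by exists `|x - c0|, c0.
have Dinf : has_inf D by split => //; exists 0 => r [c _ ->].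
set d := inf D.
have d0 : 0 <= d by apply: lb_le_inf => // r [c _ ->].
have dle w : C w -> d <= `|x - w|.
  by move=> Cw; apply: ge_inf; [case: Dinf | exists w].
have [c hc] : exists c : nat -> V,
    forall n, C (c n) /\ `|x - c n| < d + n.+1%:R^-1.
  suff /choice[c hc] : forall n, exists c, C c /\ `|x - c| < d + n.+1%:R^-1.
    by exists c.
  move=> n; have [|r [c Cc ->] hr] := @inf_adherent _ _ n.+1%:R^-1 _ Dinf.
    by rewrite invr_gt0.
  by exists c.
have [l cl] := cauchy_seq_cvg (minimizing_seq_cauchy Ccv d0 dle hc).
exists l.
  apply: (closed_cvg _ Ccl _ _ cl).
  by exists 0%N => // n _; case: (hc n).
move=> w Cw; apply/ler_addgt0Pr => e e0.
have e2 : 0 < e / 2 by lra.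
have [N1 HN1] := (cvgn_dist_ltP c l).1 cl _ e2.
have [N2 HN2] := natSinv_lt e2.
pose n := maxn N1 N2.
have h1 := HN1 n (leq_maxl _ _); have h2 := HN2 n (leq_maxr _ _).
have [_ hn] := hc n; have dw := dle _ Cw.
have tri : `|x - l| <= `|x - c n| + `|l - c n|.
  have -> : x - l = (x - c n) + (c n - l) by rewrite addrA subrK.
  by rewrite (distrC l) ler_normD.
set i := n.+1%:R^-1 in h2 hn; lra.
Qed.

End NearestPoint.

Section MetricProjection.
Context {R : realType} {V : completeNormedModType R} (ip : inner_product V).
Context {C : set V}.
Hypotheses (C_closed : closed C) (C_convex : convex C) (C_neq0 : C !=set0).

Lemma metric_projP (x : V) :
  C (metric_proj C x) /\ forall w, C w -> `|x - metric_proj C x| <= `|x - w|.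
Proof.
have [c Cc hc] := nearest_point_exists ip C x C_closed C_convex C_neq0.
by apply: (@xgetPex _ 0 [set z | C z /\ _]); exists c.
Qed.

Lemma metric_proj_mem x : C (metric_proj C x).
Proof. by case: (metric_projP x). Qed.

Lemma metric_proj_min x w : C w -> `|x - metric_proj C x| <= `|x - w|.
Proof. by case: (metric_projP x) => _; apply. Qed.

(* Minimality against the points [(1 - t) c + t w] of the segment [c, w] gives
   [2 <x - c, w - c> <= t |w - c|^2] for every [t] in ]0, 1]. *)
Lemma metric_proj_variational x w :
  C w -> ip (x - metric_proj C x) (w - metric_proj C x) <= 0.
Proof.
move=> Cw; set c := metric_proj C x.
set A := ip (x - c) (w - c); set B := `|w - c| ^+ 2.
have B0 : 0 <= B by apply: sqr_ge0.
have key (t : R) : 0 < t -> t <= 1 -> 2 * A <= t * B.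
  move=> t0 t1.
  have Ct : C ((1 - t) *: c + t *: w).
    by apply: C_convex; [exact: metric_proj_mem | | rewrite t1 ltW].
  have := metric_proj_min x _ Ct.
  have -> : x - ((1 - t) *: c + t *: w) = (x - c) - t *: (w - c).
    by rewrite scalerBl scale1r scalerBr !opprD !opprK !addrA addrAC.
  rewrite -(ler_pXn2r (n := 2)) ?nnegrE // (sqr_normB ip (x - c)) inner_scaler normrZ.
  rewrite exprMn ger0_norm ?(ltW t0) // -/A -/B; nra.
rewrite leNgt; apply/negP => A0.
have AB : 0 < A + B by lra.
have := key (A / (A + B)) (divr_gt0 A0 AB).
rewrite ler_pdivrMr // mul1r lerDl B0 => /(_ isT).
have : A / (A + B) * (A + B) = A by rewrite divfK //; lra.
nra.
Qed.

End MetricProjection.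

Section Riesz.
Context {R : realType} {V : completeNormedModType R} (ip : inner_product V).

(* [f] is represented by a vector orthogonal to its (closed) kernel [N]: the residual
   [u - P_N u] of any [u] outside [N]. *)
Lemma riesz_representation (f : V -> R) (K : R) :
  (forall w1 w2, f (w1 + w2) = f w1 + f w2) ->
  (forall (c : R) w, f (c *: w) = c * f w) ->
  (forall w, `|f w| <= K * `|w|) -> exists z, forall w, f w = ip z w.
Proof.
move=> fD fZ fK.
have f0 : f 0 = 0 by rewrite -(scale0r (0 : V)) fZ mul0r.
have fB w1 w2 : f (w1 - w2) = f w1 - f w2 by rewrite fD -scaleN1r fZ mulN1r.
have [f_eq0 | /existsNP[u fu]] := pselect (forall w, f w = 0).
  by exists 0 => w; rewrite inner0l f_eq0.
have K0 : 0 < K.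
  have := fK u; have : 0 < `|f u| by rewrite normr_gt0; apply/eqP.
  by have := normr_ge0 u; nra.
pose N := [set w | f w = 0].
have Ncl : closed N.
  move=> p clp; rewrite /N /=; apply/eqP; rewrite -normr_le0.
  apply/ler_addgt0Pr => e e0; rewrite add0r.
  have [q [Nq]] := clp _ (nbhsx_ballx p _ (divr_gt0 e0 K0)).
  rewrite -ball_normE /= => pq.
  have := fK (p - q); rewrite fB Nq subr0 => /le_trans; apply.
  by rewrite -ler_pdivlMl // mulrC ltW.
have Ncv : convex N by move=> p q t Np Nq _; rewrite /N /= fD !fZ Np Nq !mulr0 addr0.
have N0 : N !=set0 by exists 0.
set q := metric_proj N u; set e := u - q.
have Nq : N q := metric_proj_mem ip Ncl Ncv N0 u.
have fe : f e = f u by rewrite /e fB Nq subr0.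
have fe0 : f e != 0 by apply/eqP; rewrite fe.
have e_orth m : N m -> ip e m = 0.
  move=> Nm.
  have Nqm : N (q + m) by rewrite /N /= fD Nq Nm addr0.
  have Nqm' : N (q - m) by rewrite /N /= fB Nq Nm subr0.
  have := metric_proj_variational ip Ncl Ncv N0 u _ Nqm.
  have := metric_proj_variational ip Ncl Ncv N0 u _ Nqm'.
  rewrite -/q -/e addrC addKr addrC addKr innerNr; lra.
have ee0 : ip e e != 0.
  by rewrite -(inner_norm ip) sqrf_eq0 normr_eq0; apply: contraNneq fe0 => ->; rewrite f0.
exists ((f e / ip e e) *: e) => w.
have : N (w - (f w / f e) *: e) by rewrite /N /= fB fZ divfK // subrr.
move/e_orth/eqP; rewrite innerBr inner_scaler subr_eq0 => /eqP ew.
by rewrite inner_scalel ew; field; rewrite fe0 ee0.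
Qed.

End Riesz.

Section WeakCluster.
Context {R : realType} {V : completeNormedModType R} (ip : inner_product V).

(* Not a subsequence: the indices witnessing closeness may depend on [w]. *)
Definition weak_cluster (x : nat -> V) (P : nat -> Prop) (z : V) :=
  forall w (e : R) N, 0 < e ->
    exists n, [/\ (N <= n)%N, P n & `|ip (x n - z) w| < e].

Lemma weak_cluster_le0 x P z w (c : R) : weak_cluster x P z ->
  (forall e : R, 0 < e -> exists N, forall n, (N <= n)%N -> c <= e + ip (x n - z) w) ->
  c <= 0.
Proof.
move=> xz hc; apply/ler_addgt0Pr => e e0; rewrite add0r.
have [N HN] := hc (e / 2) (divr_gt0 e0 (ltr0Sn _ 1)).
have [n [Nn _]] := xz w (e / 2) N (divr_gt0 e0 (ltr0Sn _ 1)).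
by rewrite ltr_norml => /andP[_ ?]; have := HN n Nn; lra.
Qed.

Lemma weak_cluster_mem {C : set V} {x P z} :
  closed C -> convex C -> C !=set0 -> (forall n, C (x n)) ->
  weak_cluster x P z -> C z.
Proof.
move=> Ccl Ccv C0 Cx xz.
have Cq : C (metric_proj C z) := metric_proj_mem ip Ccl Ccv C0 z.
set q := metric_proj C z in Cq *.
suff /subr0_eq -> : z - q = 0 by [].
apply: sqr_norm_le0; rewrite (inner_norm ip).
apply: (@weak_cluster_le0 _ _ _ (q - z) _ xz) => e e0; exists 0%N => n _.
have := metric_proj_variational ip Ccl Ccv C0 z _ (Cx n).
rewrite -/q !innerE (inner_sym ip (x n) z) (inner_sym ip (x n) q).
by rewrite (inner_sym ip q z); lra.
Qed.

End WeakCluster.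

(* [ArrowAsProduct] equips [V -> R] with the product topology, in which the
   functionals bounded by [M |w|] form a compact set by Tychonoff's theorem. *)
Module WeakCompactness.
Import ArrowAsProduct.

Section WeakClusterExists.
Context {R : realType} {V : completeNormedModType R} (ip : inner_product V).

Lemma nbhs_proj_lt (f : V -> R) w (e : R) : 0 < e ->
  nbhs f [set g : V -> R | `|g w - f w| < e].
Proof.
move=> e0.
have := @proj_continuous V (fun _ => R) w f (ball (f w) e) (nbhsx_ballx _ _ e0).
rewrite /= nbhs_simpl; apply: (filterS (P := proj w @^-1` ball (f w) e)).
by move=> g /=; rewrite -ball_normE /= distrC.
Qed.

Lemma functional_cluster (x : nat -> V) (M : R) (P : nat -> Prop) :
  (forall n, `|x n| <= M) -> (forall N, exists n, (N <= n)%N /\ P n) ->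
  exists2 f : V -> R, (forall w, `|f w| <= M * `|w|) &
    forall w1 w2 w3 (e : R) N, 0 < e -> exists n, [/\ (N <= n)%N, P n &
      [/\ `|ip (x n) w1 - f w1| < e, `|ip (x n) w2 - f w2| < e
        & `|ip (x n) w3 - f w3| < e]].
Proof.
move=> xM Pinf.
pose B N := [set n | (N <= n)%N /\ P n].
have BF : ProperFilter (filter_from setT B).
  apply: filter_from_proper => [|N _]; last by have [n hn] := Pinf N; exists n.
  apply: filter_from_filter; first by exists 0%N.
  move=> i j _ _; exists (maxn i j) => // n [].
  by rewrite geq_max => /andP[iN jN] Pn; split; split.
pose ev n : V -> R := fun w => ip (x n) w.
pose A := [set f : V -> R | forall w, `[- (M * `|w|), M * `|w|]%classic (f w)].
have Acpt : compact A.
  exact: (@tychonoff V (fun _ => R) (fun w => `[- (M * `|w|), M * `|w|]%classic)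
    (fun w => @segment_compact R _ _)).
have evA : (ev @ filter_from setT B) A.
  exists 0%N => // n _ w /=; rewrite in_itv /= -ler_norml.
  by apply: (le_trans (cauchy_schwarz ip _ _)); apply: ler_wpM2r.
have [f [Af clf]] := Acpt _ (fmap_proper_filter ev BF) evA.
exists f => [w | w1 w2 w3 e N e0].
  by have := Af w; rewrite /= in_itv /= -ler_norml.
have evN : (ev @ filter_from setT B) [set g | exists n, B N n /\ g = ev n].
  by exists N => // n Bn /=; exists n.
have [g [[n [[Nn Pn] ->]] [h1 [h2 h3]]]] := clf _ _ evN (filterI
  (nbhs_proj_lt f w1 e e0) (filterI (nbhs_proj_lt f w2 e e0) (nbhs_proj_lt f w3 e e0))).
by exists n.
Qed.

Lemma weak_cluster_exists (x : nat -> V) (M : R) (P : nat -> Prop) :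
  (forall n, `|x n| <= M) -> (forall N, exists n, (N <= n)%N /\ P n) ->
  exists z, weak_cluster ip x P z.
Proof.
move=> xM Pinf; have [f fM fx] := functional_cluster x M P xM Pinf.
have fD w1 w2 : f (w1 + w2) = f w1 + f w2.
  apply/eqP; rewrite -subr_eq0 -normr_le0; apply/ler_addgt0Pr => e e0.
  have [n [_ _ []]] := fx (w1 + w2) w1 w2 _ 0%N (divr_gt0 e0 (ltr0Sn _ 2)).
  rewrite inner_addr !ltr_distlC add0r ler_norml.
  by move=> /andP[? ?] /andP[? ?] /andP[? ?]; apply/andP; split; lra.
have fZ (c : R) w : f (c *: w) = c * f w.
  apply/eqP; rewrite -subr_eq0 -normr_le0; apply/ler_addgt0Pr => e e0.
  have c1 : 0 < `|c| + 1 by have := normr_ge0 c; lra.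
  pose t := e / (2 * (`|c| + 1)).
  have t0 : 0 < t by apply: divr_gt0 => //; lra.
  have ct : `|c| * t + t = e / 2 by rewrite /t; field; lra.
  have [n [_ _ [h1 h2 _]]] := fx (c *: w) w w _ 0%N t0.
  have h3 : `|c * (ip (x n) w - f w)| <= `|c| * t.
    by rewrite normrM; apply: ler_wpM2l => //; apply: ltW.
  move: h1 h3; rewrite inner_scaler add0r ltr_distlC !ler_norml.
  by move=> /andP[? ?] /andP[? ?]; apply/andP; split; nra.
have [z fz] := riesz_representation ip f M fD fZ fM.
exists z => w e N e0; have [n [Nn Pn [h _ _]]] := fx w w w e N e0.
by exists n; rewrite innerBl -fz.
Qed.

End WeakClusterExists.
End WeakCompactness.
Import WeakCompactness.

Lemma limn_inf_gt0_eventually_ge {R : realType} {w : nat -> R} :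
  (forall n, 0 <= w n <= 1) -> 0 < limn_inf w ->
  exists2 c, 0 < c & exists N, forall n, (N <= n)%N -> c <= w n.
Proof.
move=> w01.
have wb : bounded_fun w.
  exists 1; split => // M M1 n _ /=; have /andP[w0 w1] := w01 n.
  by rewrite ger0_norm // (le_trans w1) // ltW.
have lb n : has_lbound (sdrop w n) by exists 0 => r [k _ <-]; case/andP: (w01 k).
have hs : has_sup (range (infs w)).
  split; first by exists (infs w 0%N), 0%N.
  exists 1 => r [n _ <-]; rewrite /infs /=.
  apply: (le_trans (ge_inf (lb n) _)); first by exists n => /=.
  by case/andP: (w01 n).
rewrite limn_infE // => s0; set s := sup _ in s0.
have s2 : 0 < s / 2 by rewrite divr_gt0.
have [r [n _ <-] hr] := sup_adherent s2 hs.
exists (s / 2) => //; exists n => m nm.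
apply: (le_trans (ltW _)); last by apply: (ge_inf (lb n)); exists m.
by move: hr; rewrite -/s; lra.
Qed.

Lemma nonincreasing_cauchy {R : realType} {D : nat -> R} :
  (forall n, D n.+1 <= D n) -> (forall n, 0 <= D n) ->
  forall e : R, 0 < e ->
    exists N, forall n m, (N <= n)%N -> (n <= m)%N -> D n - D m < e.
Proof.
move=> Dd D0 e e0.
have Dni : nonincreasing_seq D by apply/nonincreasing_seqP.
have lb : has_lbound (range D) by exists 0 => r [n _ <-].
have [N HN] := (cvgn_dist_ltP _ _).1 (nonincreasing_cvgn Dni lb) _ e0.
exists N => n m Nn nm.
have Dinf : inf (range D) <= D m by apply: ge_inf => //; exists m.
have Dnm : D m <= D n by apply: Dni.
by move: (HN n Nn); rewrite ltr_distlC; lra.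
Qed.

Section GeneralizedHybrid.
Context {R : realType} {V : completeNormedModType R} (ip : inner_product V).
Context {E : set V} {S : V -> V} {lam gam : R}.
Hypothesis hS : gen_hybrid E S lam gam.

Lemma gen_hybrid_quasi_nonexpansive {z p : V} : E z -> E p -> S p = p ->
  `|p - S z| <= `|p - z|.
Proof.
move=> Ez Ep Sp; have := hS _ _ Ep Ez; rewrite Sp => h.
by rewrite -(ler_pXn2r (n := 2)) ?nnegrE //; lra.
Qed.

Lemma gen_hybrid_fixpts_closed : closed E -> closed (E `&` fixpts S).
Proof.
move=> Ecl p clp.
have Ep : E p by apply: Ecl => B nB; have [q [[Eq _] Bq]] := clp B nB; exists q.
split => //; apply/eqP; rewrite -subr_eq0 -normr_le0.
apply/ler_addgt0Pr => e e0; rewrite add0r.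
have [q [[Eq Sq] pq]] := clp _ (nbhsx_ballx p _ (divr_gt0 e0 (ltr0Sn _ 1))).
move: pq; rewrite -ball_normE /= => pq.
have := gen_hybrid_quasi_nonexpansive Ep Eq Sq; rewrite !(distrC q) => qp.
have -> : S p - p = (S p - q) + (q - p) by rewrite addrA subrK.
by apply: (le_trans (ler_normD _ _)); rewrite (distrC q); lra.
Qed.

(* For [w = (1 - t) p + t q], the convex-combination identity applied to [S w - p],
   [S w - q] and quasi-nonexpansiveness bound [|S w - w|^2] by
   [t (1 - t) |p - q|^2 (t + (1 - t) - 1) = 0]. *)
Lemma gen_hybrid_fixpts_convex : convex E -> convex (E `&` fixpts S).
Proof.
move=> Ecv p q t [Ep Sp] [Eq Sq] t01; have /andP[t0 t1] := t01.
set w := (1 - t) *: p + t *: q; have Ew : E w by apply: Ecv.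
split => //; apply: subr0_eq; apply: sqr_norm_le0.
have := sqr_norm_convex_comb ip t (S w - p) (S w - q).
have -> : S w - p - (S w - q) = q - p by rewrite opprB addrC addrA subrK.
rewrite convex_comb_subr -/w => ->.
have hp : p - w = t *: (p - q).
  by rewrite -(convex_comb_subr t p p q) subrr scaler0 add0r.
have hq : q - w = (1 - t) *: (q - p).
  by rewrite -(convex_comb_subr t q p q) subrr scaler0 addr0.
have := gen_hybrid_quasi_nonexpansive Ew Ep Sp.
have := gen_hybrid_quasi_nonexpansive Ew Eq Sq.
rewrite hp hq !normrZ !ger0_norm ?subr_ge0 // (distrC p (S w)) (distrC q (S w)).
rewrite (distrC q p); set P := `|S w - p|; set Q := `|S w - q|; set D := `|p - q|.
have [P0 Q0 D0] : [/\ 0 <= P, 0 <= Q & 0 <= D] by rewrite !normr_ge0.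
move=> hQ hP.
have hP2 : P ^+ 2 <= (t * D) ^+ 2 by rewrite ler_pXn2r ?nnegrE ?mulr_ge0.
have hQ2 : Q ^+ 2 <= ((1 - t) * D) ^+ 2.
  by rewrite ler_pXn2r ?nnegrE ?mulr_ge0 ?subr_ge0.
nra.
Qed.

(* Expanding [S x = x + (S x - x)] in the defining inequality of [S] at [(x, z)]. *)
Lemma gen_hybrid_almost_fixed {x z : V} : E x -> E z ->
  `|x - S z| ^+ 2 <= `|x - z| ^+ 2 + (`|lam| + `|gam|) *
    (`|S x - x| ^+ 2 + 2 * `|S x - x| * (`|x - S z| + `|x - z|)).
Proof.
move=> Ex Ez; have := hS _ _ Ex Ez.
set d := S x - x.
have -> : S x - S z = d + (x - S z) by rewrite addrA subrK.
have -> : S x - z = d + (x - z) by rewrite addrA subrK.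
rewrite !(sqr_normD ip d).
set C := `|d| ^+ 2 + 2 * `|d| * (`|x - S z| + `|x - z|).
have bound v : `|v| <= `|x - S z| + `|x - z| -> `| `|d| ^+ 2 + 2 * ip d v| <= C.
  move=> hv; apply: (le_trans (ler_normD _ _)).
  rewrite ger0_norm ?sqr_ge0 // normrM ger0_norm // lerD2l -mulrA ler_pM2l //.
  by apply: (le_trans (cauchy_schwarz ip _ _)); apply: ler_wpM2l.
have := bound (x - S z); rewrite lerDl normr_ge0 => /(_ isT) b1.
have := bound (x - z); rewrite lerDr normr_ge0 => /(_ isT) b2.
have l1 : - lam * (`|d| ^+ 2 + 2 * ip d (x - S z)) <= `|lam| * C.
  by apply: (le_trans (ler_norm _)); rewrite normrM normrN ler_wpM2l.
have l2 : gam * (`|d| ^+ 2 + 2 * ip d (x - z)) <= `|gam| * C.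
  by apply: (le_trans (ler_norm _)); rewrite normrM ler_wpM2l.
lra.
Qed.

Lemma gen_hybrid_demiclosed {x : nat -> V} {P z} {M : R} :
  (forall n, E (x n)) -> (forall n, `|x n| <= M) ->
  (forall e : R, 0 < e -> exists N, forall n, (N <= n)%N -> `|S (x n) - x n| < e) ->
  weak_cluster ip x P z -> E z -> S z = z.
Proof.
move=> Ex xM reg xz Ez; apply: subr0_eq; apply: sqr_norm_le0.
apply: (@weak_cluster_le0 _ _ ip _ _ _ (2 *: (S z - z)) _ xz) => e e0.
set K := `|lam| + `|gam|; set B := M + `|S z| + `|z|.
have M0 : 0 <= M := le_trans (normr_ge0 _) (xM 0%N).
have [K0 B0] : 0 <= K /\ 0 <= B by split; rewrite !addr_ge0.
pose C := K * (1 + 4 * B).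
have C0 : 0 <= C by rewrite mulr_ge0 // addr_ge0 // mulr_ge0.
have Ce0 : 0 < C + e by rewrite ltr_wpDl.
have [N HN] := reg (e / (C + e)) (divr_gt0 e0 Ce0).
exists N => n Nn; have := gen_hybrid_almost_fixed (Ex n) Ez.
have -> : `|x n - S z| ^+ 2 =
    `|x n - z| ^+ 2 + 2 * ip (x n - z) (z - S z) + `|z - S z| ^+ 2.
  by rewrite -sqr_normD addrA subrK.
have -> : ip (x n - z) (2 *: (S z - z)) = - (2 * ip (x n - z) (z - S z)).
  by rewrite inner_scaler -[S z - z]opprB innerNr mulrN.
rewrite -/K (distrC z).
set D := `|S (x n) - x n|; set a := `|x n - S z|; set b' := `|x n - z|.
have aB : a <= B.
  apply: (le_trans (ler_normB _ _)); have := xM n; have := normr_ge0 z; rewrite /B; lra.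
have bB : b' <= B.
  apply: (le_trans (ler_normB _ _)); have := xM n; have := normr_ge0 (S z); rewrite /B; lra.
have [D0 a0 b0] : [/\ 0 <= D, 0 <= a & 0 <= b'] by rewrite !normr_ge0.
have De : D * (C + e) < e by rewrite -ltr_pdivlMr //; exact: HN n Nn.
have D1 : D <= 1 by nra.
have hD : D ^+ 2 + 2 * D * (a + b') <= D * (1 + 4 * B) by nra.
have hK : K * (D ^+ 2 + 2 * D * (a + b')) <= C * D.
  have -> : C * D = K * (D * (1 + 4 * B)) by rewrite /C; ring.
  exact: ler_wpM2l.
nra.
Qed.

End GeneralizedHybrid.

Section IshikawaIteration.
Context {R : realType} {V : completeNormedModType R} (ip : inner_product V).
Context {E : set V} {S : V -> V} {lam gam alpha b : R} {a beta : nat -> R}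
  {x0 : V} {x u y : nat -> V}.
Hypotheses (hE0 : E !=set0) (hEcl : closed E) (hEcv : convex E)
  (hSE : forall z, E z -> E (S z)) (hS : gen_hybrid E S lam gam)
  (hF : exists z, E z /\ S z = z)
  (halpha : 0 < alpha) (ha : forall n, alpha <= a n <= 1)
  (hb : 0 < b < 1) (hbeta : forall n, b <= beta n <= 1)
  (hliminf : 0 < limn_inf (fun n => beta n * (1 - beta n)))
  (hx0E : E x0) (hx0 : x 0%N = x0)
  (hu : forall n, E (u n) /\ forall z, E z -> 0 <= ip (z - u n) (u n - x n))
  (hy : forall n, y n = (1 - beta n) *: x n + beta n *: S (u n))
  (hx : forall n, x n.+1 = (1 - a n) *: x n + a n *: S (y n)).

Let F := E `&` fixpts S.

Let F_neq0 : F !=set0.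
Proof. by case: hF => z [Ez Sz]; exists z. Qed.

Let F_closed : closed F := gen_hybrid_fixpts_closed hS hEcl.

Let F_convex : convex F := gen_hybrid_fixpts_convex ip hS hEcv.

Let proj n := metric_proj F (x n).

Lemma a_ge0_le1 n : 0 <= a n <= 1.
Proof. by have /andP[an ->] := ha n; rewrite (le_trans (ltW halpha)). Qed.

Lemma beta_ge0_le1 n : 0 <= beta n <= 1.
Proof. by have /andP[bn ->] := hbeta n; case/andP: hb => b0 _; rewrite (le_trans (ltW b0)). Qed.

(* [u n] is the metric projection of [x n] onto [E], hence [x n] itself. *)
Lemma iterate_mem_u_eq n : E (x n) /\ u n = x n.
Proof.
have u_eq k : E (x k) -> u k = x k.
  move=> Exk; have := (hu k).2 _ Exk.
  rewrite -opprB innerNl -(inner_norm ip) oppr_ge0 => /sqr_norm_le0.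
  by move/subr0_eq.
elim: n => [|n [Exn un]].
  have Ex0 : E (x 0%N) by rewrite hx0.
  by split => //; apply: u_eq.
have Eyn : E (y n).
  by rewrite hy un; apply: hEcv => //; [exact: hSE | exact: beta_ge0_le1].
have Exn1 : E (x n.+1).
  by rewrite hx; apply: hEcv => //; [exact: hSE | exact: a_ge0_le1].
by split => //; apply: u_eq.
Qed.

Lemma iterate_mem n : E (x n). Proof. by case: (iterate_mem_u_eq n). Qed.

Lemma u_eq n : u n = x n. Proof. by case: (iterate_mem_u_eq n). Qed.

(* Two applications of the convex-combination identity, through [y n] and [S (y n)],
   and quasi-nonexpansiveness of [S] at each step. *)
Lemma dist_fixpt_decrease {p : V} n : F p ->
  `|p - x n.+1| ^+ 2 <= `|p - x n| ^+ 2
     - a n * (beta n * (1 - beta n)) * `|x n - S (x n)| ^+ 2.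
Proof.
move=> [Ep Sp].
have yn : y n = (1 - beta n) *: x n + beta n *: S (x n) by rewrite hy u_eq.
have Eyn : E (y n) by rewrite yn; apply: hEcv; [exact: iterate_mem | apply: hSE;
  exact: iterate_mem | exact: beta_ge0_le1].
have := sqr_norm_convex_comb ip (a n) (p - x n) (p - S (y n)).
rewrite convex_comb_subr -hx => ->.
have := sqr_norm_convex_comb ip (beta n) (p - x n) (p - S (x n)).
rewrite convex_comb_subr -yn.
have -> : p - x n - (p - S (x n)) = - (x n - S (x n)).
  by rewrite opprB addrC addrA subrK opprB.
rewrite normrN => hyp.
have qne z : E z -> `|p - S z| ^+ 2 <= `|p - z| ^+ 2.
  by move=> Ez; rewrite ler_pXn2r ?nnegrE // (gen_hybrid_quasi_nonexpansive hS Ez Ep Sp).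
have q1 := qne _ Eyn; have q2 := qne _ (iterate_mem n).
have /andP[a0 a1] := a_ge0_le1 n; have /andP[b0 b1] := beta_ge0_le1 n.
set A := `|p - x n| ^+ 2 in hyp q2 *; set Q := `|x n - S (x n)| ^+ 2 in hyp *.
set P := `|p - x n - (p - S (y n))| ^+ 2.
have [P0 Q0] : 0 <= P /\ 0 <= Q by split; apply: sqr_ge0.
have hC : `|p - y n| ^+ 2 <= A - beta n * (1 - beta n) * Q.
  by rewrite hyp; nra.
have : a n * `|p - S (y n)| ^+ 2 <= a n * (A - beta n * (1 - beta n) * Q).
  by apply: ler_wpM2l => //; apply: le_trans hC.
have : 0 <= a n * (1 - a n) * P by rewrite !mulr_ge0 // subr_ge0.
nra.
Qed.

Lemma dist_fixpt_nonincreasing {p : V} {n m : nat} : F p -> (n <= m)%N ->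
  `|p - x m| <= `|p - x n|.
Proof.
move=> Fp; suff : nonincreasing_seq (fun k => `|p - x k|) by apply.
apply/nonincreasing_seqP => k.
rewrite -(ler_pXn2r (n := 2)) ?nnegrE //; apply: le_trans (dist_fixpt_decrease k Fp) _.
rewrite gerBl !mulr_ge0 ?sqr_ge0 //; first by case/andP: (a_ge0_le1 k).
  by case/andP: (beta_ge0_le1 k).
by case/andP: (beta_ge0_le1 k) => _; rewrite subr_ge0.
Qed.

(* [|p - x n|^2] converges, and its decrements dominate [alpha c |x n - S x n|^2],
   with [c] an eventual lower bound of [beta n (1 - beta n)]. *)
Lemma asymptotically_regular (e : R) : 0 < e ->
  exists N, forall n, (N <= n)%N -> `|S (x n) - x n| < e.
Proof.
move=> e0; have [p Fp] := F_neq0.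
have [c c0 [N1 HN1]] : exists2 c : R, 0 < c &
    exists N, forall n, (N <= n)%N -> c <= beta n * (1 - beta n).
  apply: limn_inf_gt0_eventually_ge hliminf => n.
  by have /andP[b0 b1] := beta_ge0_le1 n; apply/andP; split; nra.
have dec n : `|p - x n.+1| ^+ 2 <= `|p - x n| ^+ 2.
  by rewrite ler_pXn2r ?nnegrE //; apply: dist_fixpt_nonincreasing.
have del0 : 0 < alpha * c * e ^+ 2 by rewrite !mulr_gt0 // exprn_gt0.
have [N2 HN2] := nonincreasing_cauchy dec (fun n => sqr_ge0 _) _ del0.
exists (maxn N1 N2) => n; rewrite geq_max => /andP[n1 n2].
rewrite distrC -(ltr_pXn2r (n := 2)) ?nnegrE ?(ltW e0) //.
have := HN2 n n.+1 n2 (leqnSn n); have := dist_fixpt_decrease n Fp.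
have /andP[an _] := ha n; have := HN1 n n1.
set B := beta n * (1 - beta n); set Q := `|x n - S (x n)| ^+ 2.
have Q0 : 0 <= Q by apply: sqr_ge0.
move=> cB hdec hcau.
have : alpha * c * Q <= a n * B * Q.
  by apply: ler_wpM2r => //; apply: ler_pM => //; apply: ltW.
rewrite -(ltr_pM2l (mulr_gt0 halpha c0)); nra.
Qed.

Lemma iterate_bounded : exists M, forall n, `|x n| <= M.
Proof.
have [p Fp] := F_neq0; exists (`|p| + `|p - x 0%N|) => n.
have -> : x n = p - (p - x n) by rewrite opprB addrC subrK.
apply: (le_trans (ler_normB _ _)); rewrite lerD2l.
exact: dist_fixpt_nonincreasing.
Qed.

Lemma proj_mem n : F (proj n).
Proof.
exact: (@metric_proj_mem _ _ ip F F_closed F_convex F_neq0 (x n)).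
Qed.

Lemma proj_min n w : F w -> `|x n - proj n| <= `|x n - w|.
Proof. exact: (@metric_proj_min _ _ ip F F_closed F_convex F_neq0 (x n)). Qed.

Lemma proj_variational n w : F w -> ip (x n - proj n) (w - proj n) <= 0.
Proof.
exact: (@metric_proj_variational _ _ ip F F_closed F_convex F_neq0 (x n)).
Qed.

(* By Fejér monotonicity, [|x m - proj n| <= |x n - proj n|]; combined with the
   variational inequality at [proj m] this is a Pythagorean estimate. *)
Lemma proj_dist_sub {n m : nat} : (n <= m)%N ->
  `|proj m - proj n| ^+ 2 <= `|x n - proj n| ^+ 2 - `|x m - proj m| ^+ 2.
Proof.
move=> nm; have Fn := proj_mem n.
have := dist_fixpt_nonincreasing Fn nm; rewrite !(distrC (proj n)).
rewrite -(ler_pXn2r (n := 2)) ?nnegrE //.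
have -> : x m - proj n = (x m - proj m) - (proj n - proj m).
  by rewrite opprB addrA subrK.
rewrite (sqr_normB ip) (distrC (proj m)).
by have := proj_variational m _ Fn; lra.
Qed.

Lemma proj_fixpts_cvg : exists2 v, F v & proj @ \oo --> v.
Proof.
pose r n := `|x n - proj n| ^+ 2.
have r_dec n : r n.+1 <= r n.
  rewrite /r ler_pXn2r ?nnegrE //.
  apply: le_trans (proj_min n.+1 _ (proj_mem n)) _.
  rewrite (distrC (x n.+1)) (distrC (x n)).
  exact: dist_fixpt_nonincreasing (proj_mem n) (leqnSn n).
have [v pv] : exists v : V, proj @ \oo --> v.
  apply: cauchy_seq_cvg => e e0.
  have [N HN] := nonincreasing_cauchy r_dec (fun n => sqr_ge0 _) _ (exprn_gt0 2 e0).
  have key i j : (N <= i)%N -> (i <= j)%N -> `|proj j - proj i| < e.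
    move=> Ni ij; rewrite -(ltr_pXn2r (n := 2)) ?nnegrE ?(ltW e0) //.
    exact: le_lt_trans (proj_dist_sub ij) (HN i j Ni ij).
  exists N => m n Nm Nn; case: (leqP m n) => mn.
    by rewrite distrC; apply: key.
  by apply: key => //; apply: ltnW.
exists v => //; apply: closed_cvg pv => //.
by exists 0%N => // n _; apply: proj_mem.
Qed.

(* Along [proj n -> v], the variational inequality at [proj n] tested with [z]
   gives [<x n - v, z - v> <= o(1)], so [|z - v|^2 <= o(1) + <x n - z, v - z>]. *)
Lemma weak_cluster_eq_proj_lim {v z : V} {P} : F v -> proj @ \oo --> v ->
  weak_cluster ip x P z -> z = v.
Proof.
move=> Fv pv xz; have [M xM] := iterate_bounded.
have Ez : E z := weak_cluster_mem ip hEcl hEcv hE0 iterate_mem xz.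
have Sz : S z = z.
  exact: (gen_hybrid_demiclosed ip hS iterate_mem xM asymptotically_regular xz Ez).
apply: subr0_eq; apply: sqr_norm_le0.
apply: (@weak_cluster_le0 _ _ ip _ _ _ (v - z) _ xz) => e e0.
have M0 : 0 <= M := le_trans (normr_ge0 _) (xM 0%N).
pose C := M + `|v| + 1 + `|z - v|.
have C0 : 0 <= C by rewrite /C !addr_ge0.
have Ce0 : 0 < C + e by rewrite ltr_wpDl.
have [N HN] := (cvgn_dist_ltP _ _).1 pv _ (divr_gt0 e0 Ce0).
exists N => n Nn; have := proj_variational n z (conj Ez Sz).
have := HN n Nn; rewrite distrC ltr_pdivlMr // => De.
set p := proj n in De *; set D := `|p - v| in De.
have D0 : 0 <= D by apply: normr_ge0.
have D1 : D <= 1 by nra.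
have hxp : `|x n - p| <= M + `|v| + 1.
  apply: (le_trans (ler_normB _ _)).
  have : `|p| <= `|v| + D by rewrite -[p](subrK v) addrC ler_normD.
  by have := xM n; lra.
have i1 := cauchy_schwarz ip (x n - p) (p - v).
have i2 := cauchy_schwarz ip (p - v) (z - v).
rewrite -/D !ler_norml in i1 i2.
move: i1 i2 => /andP[_ i1] /andP[_ i2].
have i3 : ip (x n - p) (p - v) <= (M + `|v| + 1) * D.
  by apply: le_trans i1 _; apply: ler_wpM2r.
rewrite (inner_norm ip) !innerE (inner_sym ip v z) in i2 i3 *.
have : C * D <= e by nra.
rewrite /C; lra.
Qed.

Lemma iterate_weak_cvg v : F v -> proj @ \oo --> v -> weak_cvg ip x v.
Proof.
move=> Fv pv w; apply/cvgn_dist_ltP => e e0; apply: contrapT => far.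
have Pinf N : exists n, (N <= n)%N /\ e <= `|ip v w - ip (x n) w|.
  apply: contrapT => none; apply: far; exists N => n Nn; rewrite ltNge.
  by apply/negP => en; apply: none; exists n.
have [M xM] := iterate_bounded.
have [z xz] := weak_cluster_exists ip x M _ xM Pinf.
have zv := weak_cluster_eq_proj_lim Fv pv xz; subst z.
have [n [_ Pn]] := xz w e 0%N e0.
by rewrite innerBl distrC ltNge Pn.
Qed.

End IshikawaIteration.

Theorem corollary3p2 (R : realType) (V : completeNormedModType R)
  (ip : inner_product V) (E : set V)
  (hE0 : E !=set0) (hEcl : closed E) (hEcv : convex E)
  (S : V -> V) (hSE : forall z, E z -> E (S z))
  (lam gam : R) (hS : gen_hybrid E S lam gam)
  (hF : exists z, E z /\ S z = z)
  (alpha : R) (a : nat -> R) (halpha : 0 < alpha)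
  (ha : forall n, alpha <= a n <= 1)
  (b : R) (hb : 0 < b < 1) (beta : nat -> R)
  (hbeta : forall n, b <= beta n <= 1)
  (hliminf : 0 < limn_inf (fun n => beta n * (1 - beta n)))
  (x0 : V) (hx0E : E x0) (x u y : nat -> V)
  (hx0 : x 0%N = x0)
  (hu : forall n, E (u n) /\ forall z, E z -> 0 <= ip (z - u n) (u n - x n))
  (hy : forall n, y n = (1 - beta n) *: x n + beta n *: S (u n))
  (hx : forall n, x n.+1 = (1 - a n) *: x n + a n *: S (y n)) :
  exists v : V, (E `&` fixpts S) v /\ weak_cvg ip x v /\
    (fun n => metric_proj (E `&` fixpts S) (x n)) @ \oo --> v.
Proof.
have [v Fv proj_v] :=
  proj_fixpts_cvg ip hEcl hEcv hSE hS hF halpha ha hb hbeta hx0E hx0 hu hy hx.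
exists v; split => //; split => //.
exact: (iterate_weak_cvg ip hE0 hEcl hEcv hSE hS hF halpha ha hb hbeta hliminf
  hx0E hx0 hu hy hx v Fv proj_v).
Qed.
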